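(* Let $G_8$ be the graph obtained by identifying one vertex of a $4$-cycle with one vertex of another (disjoint) $4$-cycle; i.e., $G_8$ has vertices $v_1,\ldots,v_7$ and edges $v_1v_2, v_2v_3, v_3v_7, v_7v_1, v_3v_4, v_4v_5, v_5v_6, v_6v_3$. Then $G_8$ is a partial cube that is not $\Theta$-graceful, i.e., $G_8$ admits no $\Theta$-graceful labeling.
   Context: A subgraph $H$ of a graph $G$ is isometric if $d_H(u,v)=d_G(u,v)$ for all vertices $u,v$ of $H$, where $d$ is shortest-path distance. A partial cube is a graph isomorphic to an isometric subgraph of some hypercube. The Djoković–Winkler relation $\Theta$ on the edges of $G$: edges $xy$ and $uv$ satisfy $xy\,\Theta\,uv$ iff $d(x,u)+d(y,v)\neq d(x,v)+d(y,u)$. On a partial cube $\Theta$ is an equivalence relation; its classes are called $\Theta$-classes. For a partial cube $G$ on $n$ vertices, a bijection $f:V(G)\to\{0,1,\ldots,n-1\}$ is a $\Theta$-graceful labeling if, labeling each edge $xy$ by $|f(x)-f(y)|$, all edges in the same $\Theta$-class receive the same label and distinct $\Theta$-classes receive distinct labels. A partial cube admitting such a labeling is called $\Theta$-graceful. *)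

From mathcomp Require Import all_boot.
Set Implicit Arguments. Unset Strict Implicit. Unset Printing Implicit Defensive.

Fixpoint walk (T : finType) (e : rel T) (k : nat) (x y : T) : bool :=
  if k is k'.+1 then [exists z, e x z && walk e k' z y] else x == y.

(* shortest-path distance as a relation: dist e x y d <-> d_e(x,y) = d
   (no d satisfies it when y is unreachable from x, i.e. distance infinity) *)
Definition dist (T : finType) (e : rel T) (x y : T) (d : nat) : Prop :=
  walk e d x y /\ forall k, k < d -> ~~ walk e k x y.

(* numeric distance, meaningful for connected graphs (least k <= #|T| with a
   walk of length k; returns #|T|.+1 if none exists) *)
Definition gdist (T : finType) (e : rel T) (x y : T) : nat :=
  find (fun k => walk e k x y) (iota 0 #|T|.+1).

Definition cube (n : nat) := {ffun 'I_n -> bool}.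
Definition cube_adj (n : nat) : rel (cube n) :=
  fun a b => #|[set i | a i != b i]| == 1.

Definition partial_cube (T : finType) (e : rel T) : Prop :=
  exists (n : nat) (S : {set cube n}) (eH : rel (cube n)) (f : T -> cube n),
    [/\
        ((forall a b, eH a b -> [/\ a \in S, b \in S & cube_adj a b])
         /\ symmetric eH),
        (forall a b, a \in S -> b \in S ->
           forall d, dist eH a b d <-> dist (@cube_adj n) a b d),
        injective f,
        ((forall x, f x \in S) /\ (forall a, a \in S -> exists x, f x = a))
      & (forall x y, e x y <-> eH (f x) (f y))].

Definition theta (T : finType) (e : rel T) (x y u v : T) : Prop :=
  gdist e x u + gdist e y v <> gdist e x v + gdist e y u.

Definition absdiff (a b : nat) : nat := (a - b) + (b - a).

Definition theta_graceful_labeling (T : finType) (e : rel T) (f : T -> 'I_#|T|) : Prop :=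
  bijective f /\
  forall x y u v, e x y -> e u v ->
    (theta e x y u v <-> absdiff (f x) (f y) = absdiff (f u) (f v)).

Definition theta_graceful (T : finType) (e : rel T) : Prop :=
  exists f : T -> 'I_#|T|, theta_graceful_labeling e f.

(* G_8: vertices v1..v7 encoded as 0..6; edges v1v2, v2v3, v3v7, v7v1, v3v4,
   v4v5, v5v6, v6v3 *)
Definition G8_edges : seq (nat * nat) :=
  [:: (0,1); (1,2); (2,6); (6,0); (2,3); (3,4); (4,5); (5,2)].
Definition G8 : rel 'I_7 :=
  fun x y => ((val x, val y) \in G8_edges) || ((val y, val x) \in G8_edges).

From mathcomp Require Import all_boot.

(* G8 embeds in Q_4.  A map of a graph into a hypercube that sends edges to
   edges and such that any two vertices are joined by a walk as long as the
   Hamming distance of their images is an isometric embedding, because no walk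
   can be shorter than that distance.  Graph distance is then Hamming distance,
   so Theta can be read off the codes, and a Theta-graceful labeling of G8
   would be a permutation of 0..6 satisfying a finite condition that an
   exhaustive check over all 7! permutations refutes. *)

Set Implicit Arguments.
Unset Strict Implicit.
Unset Printing Implicit Defensive.

Definition ham n (a b : cube n) : nat := #|[set i | a i != b i]|.

Lemma ham_sym n (a b : cube n) : ham a b = ham b a.
Proof. by apply: eq_card => i; rewrite !inE eq_sym. Qed.

Lemma ham_xx n (a : cube n) : ham a a = 0.
Proof. by apply/eqP; rewrite cards_eq0; apply/eqP/setP => i; rewrite !inE eqxx. Qed.

Lemma leq_ham_add n (a b c : cube n) : ham a c <= ham a b + ham b c.
Proof.
apply: leq_trans (leq_card_setU _ _) ; apply/subset_leq_card/subsetP => i.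
by rewrite !inE; case: (a i =P b i) => [->|/eqP].
Qed.

Lemma cube_adjE n (a b : cube n) : cube_adj a b = (ham a b == 1).
Proof. by []. Qed.

Lemma cube_adj_sym n : symmetric (@cube_adj n).
Proof. by move=> a b; rewrite !cube_adjE ham_sym. Qed.

Lemma walk_homo (T T' : finType) (e : rel T) (e' : rel T') (h : T -> T') :
  {homo h : x y / e x y >-> e' x y} ->
  forall k x y, walk e k x y -> walk e' k (h x) (h y).
Proof.
move=> eh; elim=> [|k IHk] x y /=; first by move/eqP->.
by case/existsP=> z /andP[exz wzy]; apply/existsP; exists (h z); rewrite eh ?IHk.
Qed.

Lemma leq_ham_walk n k (a b : cube n) : walk (@cube_adj n) k a b -> ham a b <= k.
Proof.
elim: k a => [|k IHk] a /=; first by move/eqP->; rewrite ham_xx.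
case/existsP=> c /andP[]; rewrite cube_adjE => /eqP adj_ac wcb.
by apply: leq_trans (leq_ham_add a c b) _; rewrite adj_ac ltnS IHk.
Qed.

Lemma dist_walk_min (T : finType) (e : rel T) m x y :
  walk e m x y -> (forall k, walk e k x y -> m <= k) ->
  forall d, dist e x y d <-> d = m.
Proof.
move=> wm m_min d; split=> [[wd d_min] | ->].
  by apply/eqP; rewrite eqn_leq m_min // leqNgt (contraTN (d_min m) wm).
by split=> // k lt_km; apply: contraTN lt_km => /m_min; rewrite leqNgt.
Qed.

Lemma gdist_dist (T : finType) (e : rel T) x y d :
  dist e x y d -> d <= #|T| -> gdist e x y = d.
Proof.
case=> wd d_min le_d.
have has_d : has (fun k => walk e k x y) (iota 0 #|T|.+1).
  by apply/hasP; exists d; rewrite ?mem_iota.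
have lt_g : gdist e x y < #|T|.+1.
  by have := has_d; rewrite has_find size_iota.
have wg : walk e (gdist e x y) x y.
  by have := nth_find 0 has_d; rewrite nth_iota; last exact: lt_g.
apply/eqP; rewrite eqn_leq; apply/andP; split; rewrite leqNgt; apply/negP.
  by move=> /(before_find 0); rewrite nth_iota ?add0n ?wd // ltnS.
by move=> /d_min/negP[].
Qed.

Definition induced_rel (T : finType) (S : {set T}) (r : rel T) : rel T :=
  fun a b => [&& a \in S, b \in S & r a b].

Section IsometricEmbedding.

Variables (T : finType) (e : rel T) (n : nat) (f : T -> cube n).
Hypothesis adj_f : forall x y, e x y -> cube_adj (f x) (f y).
Hypothesis walk_ham : forall x y, walk e (ham (f x) (f y)) x y.

Lemma leq_ham_walk_embedding k x y : walk e k x y -> ham (f x) (f y) <= k.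
Proof. by move/(walk_homo adj_f); apply: leq_ham_walk. Qed.

Lemma dist_embedding x y : dist e x y (ham (f x) (f y)).
Proof. by apply/(dist_walk_min (walk_ham x y)) => // k; apply: leq_ham_walk_embedding. Qed.

Lemma embedding_inj : injective f.
Proof. by move=> x y fxy; have := walk_ham x y; rewrite fxy ham_xx => /eqP. Qed.

Lemma adj_embeddingE x y : e x y = cube_adj (f x) (f y).
Proof.
apply/idP/idP => [/adj_f // | ]; rewrite cube_adjE => /eqP adj_xy.
by have := walk_ham x y; rewrite adj_xy /= => /existsP[z /andP[xz /eqP <-]].
Qed.

Let S := [set f x | x : T].

Lemma walk_induced k x y :
  walk (induced_rel S (@cube_adj n)) k (f x) (f y) = walk e k x y.
Proof.
elim: k x => [|k IHk] x /=; first exact: (inj_eq embedding_inj).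
apply/existsP/existsP => [[_ /andP[/and3P[_ /imsetP[z _ ->] adj_xz] wzy]] |
                          [z /andP[xz wzy]]].
  by exists z; rewrite adj_embeddingE adj_xz -IHk.
by exists (f z); rewrite /induced_rel !imset_f // -adj_embeddingE xz IHk.
Qed.

Lemma partial_cube_embedding : partial_cube e.
Proof.
have eSE x y : induced_rel S (@cube_adj n) (f x) (f y) = e x y.
  by rewrite /induced_rel !imset_f // adj_embeddingE.
exists n, S, (induced_rel S (@cube_adj n)), f; split.
- by split=> [a b /and3P[] | a b]; rewrite // /induced_rel cube_adj_sym andbCA.
- move=> _ _ /imsetP[x _ ->] /imsetP[y _ ->] d.
  set eS := induced_rel S _.
  have wS : walk eS (ham (f x) (f y)) (f x) (f y) by rewrite walk_induced.
  have minS k : walk eS k (f x) (f y) -> ham (f x) (f y) <= k.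
    by rewrite walk_induced; apply: leq_ham_walk_embedding.
  have wQ := walk_homo adj_f (walk_ham x y).
  have minQ k := @leq_ham_walk n k (f x) (f y).
  by split=> [/(dist_walk_min wS minS) -> | /(dist_walk_min wQ minQ) ->];
    [apply/(dist_walk_min wQ minQ) | apply/(dist_walk_min wS minS)].
- exact: embedding_inj.
- by split=> [x | a /imsetP[x _ ->]]; [rewrite imset_f | exists x].
- by move=> x y; rewrite eSE.
Qed.

Lemma gdist_embedding x y : n <= #|T| -> gdist e x y = ham (f x) (f y).
Proof.
move=> le_nT; apply: gdist_dist (dist_embedding x y) _.
by apply: leq_trans le_nT; apply: leq_trans (max_card _) _; rewrite card_ord.
Qed.

End IsometricEmbedding.

(* [enum 'I_n] is stuck under [vm_compute], since [insub] goes through the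
   opaque [idP]; [insub_eq] reduces, and [walk_in] replaces the [[exists z, _]]
   of [walk] by a search through such an explicit list. *)
Definition ord_enumc n : seq 'I_n := pmap (@insub_eq _ _ _) (iota 0 n).

Lemma mem_ord_enumc n (x : 'I_n) : x \in ord_enumc n.
Proof. by rewrite /ord_enumc (eq_pmap (@insub_eqE _ _ _)) mem_ord_enum. Qed.

Lemma all2_ord_enumc n (P : 'I_n -> 'I_n -> bool) :
  all (fun x => all (P x) (ord_enumc n)) (ord_enumc n) -> forall x y, P x y.
Proof.
by move=> /allP P_all x y; apply: (allP (P_all x (mem_ord_enumc x))); apply: mem_ord_enumc.
Qed.

Fixpoint walk_in (T : eqType) (s : seq T) (e : rel T) (k : nat) (x y : T) : bool :=
  if k is k'.+1 then has (fun z => e x z && walk_in s e k' z y) s else x == y.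

Lemma walk_inE (T : finType) (s : seq T) (e : rel T) :
  (forall z, z \in s) -> forall k x y, walk e k x y = walk_in s e k x y.
Proof.
move=> s_full; elim=> [|k IHk] x y //=.
apply/existsP/hasP => [[z exz] | [z _ exz]]; first by exists z; rewrite ?s_full -?IHk.
by exists z; rewrite /= IHk.
Qed.

Definition cube_of_bits n (s : seq bool) : cube n := [ffun i : 'I_n => nth false s i].

Lemma ham_cube_of_bits n (s t : seq bool) :
  ham (cube_of_bits n s) (cube_of_bits n t) =
  count (fun i => nth false s i != nth false t i) (iota 0 n).
Proof.
rewrite /ham cardsE cardE /enum_mem size_filter -enumT -val_enum_ord count_map.
by apply: eq_count => i; rewrite /= unfold_in !ffunE.
Qed.

(* Coordinates 0 and 1 cut the square v1 v2 v3 v7, coordinates 2 and 3 the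
   square v3 v4 v5 v6; the cut vertex v3 is the origin. *)
Definition G8_bits : seq (seq bool) :=
  [:: [:: true; true; false; false]; [:: true; false; false; false];
      [:: false; false; false; false]; [:: false; false; true; false];
      [:: false; false; true; true]; [:: false; false; false; true];
      [:: false; true; false; false]].

Definition G8_code (x : 'I_7) : cube 4 := cube_of_bits 4 (nth [::] G8_bits x).

Definition G8_ham (x y : 'I_7) : nat :=
  count (fun i => nth false (nth [::] G8_bits x) i != nth false (nth [::] G8_bits y) i)
        (iota 0 4).

Lemma ham_G8_code x y : ham (G8_code x) (G8_code y) = G8_ham x y.
Proof. exact: ham_cube_of_bits. Qed.

Lemma G8_adj_code x y : G8 x y -> cube_adj (G8_code x) (G8_code y).
Proof.
rewrite cube_adjE ham_G8_code; apply/implyP; move: x y; apply: all2_ord_enumc.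
by vm_compute.
Qed.

Lemma G8_walk_ham x y : walk G8 (ham (G8_code x) (G8_code y)) x y.
Proof.
rewrite ham_G8_code (walk_inE G8 (@mem_ord_enumc 7)); move: x y.
by apply: all2_ord_enumc; vm_compute.
Qed.

Lemma gdist_G8 x y : gdist G8 x y = G8_ham x y.
Proof. by rewrite (gdist_embedding G8_adj_code G8_walk_ham) ?card_ord ?ham_G8_code. Qed.

Definition G8_arcs : seq ('I_7 * 'I_7) :=
  [seq p <- [seq (x, y) | x <- ord_enumc 7, y <- ord_enumc 7] | G8 p.1 p.2].

Lemma mem_G8_arcs x y : ((x, y) \in G8_arcs) = G8 x y.
Proof. by rewrite mem_filter allpairs_f ?mem_ord_enumc ?andbT. Qed.

Definition G8_theta (a b : 'I_7 * 'I_7) : bool :=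
  G8_ham a.1 b.1 + G8_ham a.2 b.2 != G8_ham a.1 b.2 + G8_ham a.2 b.1.

Lemma G8_thetaP x y u v : reflect (theta G8 x y u v) (G8_theta (x, y) (u, v)).
Proof. by rewrite /theta !gdist_G8; apply: (iffP idP) => /eqP. Qed.

(* Tabulating Theta once keeps the search through the 7! labelings fast. *)
Definition G8_theta_table : seq ('I_7 * 'I_7 * ('I_7 * 'I_7) * bool) :=
  [seq (a, b, G8_theta a b) | a <- G8_arcs, b <- G8_arcs].

Definition label_gap (s : seq nat) (a : 'I_7 * 'I_7) : nat :=
  absdiff (nth 0 s a.1) (nth 0 s a.2).

Definition G8_graceful_seq (s : seq nat) : bool :=
  all (fun t : 'I_7 * 'I_7 * ('I_7 * 'I_7) * bool =>
         let: (a, b, th) := t in th == (label_gap s a == label_gap s b))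
      G8_theta_table.

Lemma G8_no_graceful_seq :
  all (fun s => ~~ G8_graceful_seq s) (permutations (iota 0 7)).
Proof. by vm_compute. Qed.

Lemma perm_enum_bij (T : finType) (f : T -> 'I_#|T|) :
  bijective f -> perm_eq (map (val \o f) (enum T)) (iota 0 #|T|).
Proof.
case=> g fK gK; apply: uniq_perm; rewrite ?iota_uniq //.
  by rewrite map_inj_uniq ?enum_uniq // => x y /val_inj/(can_inj fK).
move=> k; rewrite mem_iota /=; apply/mapP/idP => [[x _ ->] | lt_k]; first exact: ltn_ord.
by exists (g (Ordinal lt_k)); rewrite ?mem_enum //= gK.
Qed.

Lemma G8_not_theta_graceful : ~ theta_graceful G8.
Proof.
case=> f [bij_f graceful_f].
set s := map (val \o f) (enum 'I_7).
have s_f (x : 'I_7) : nth 0 s x = f x.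
  by rewrite (nth_map x) ?size_enum_ord ?ltn_ord // nth_ord_enum.
have /allP/(_ s) := G8_no_graceful_seq; rewrite mem_permutations.
rewrite -[7]card_ord perm_enum_bij // => /(_ isT)/negP; apply.
apply/allP=> _ /allpairsP[[[x y] [u v]] [/= /[!mem_G8_arcs] xy uv ->]].
have := graceful_f x y u v xy uv; rewrite /label_gap /= !s_f => equiv_xyuv.
by apply/eqP; apply/idP/eqP => [/G8_thetaP/equiv_xyuv | /equiv_xyuv/G8_thetaP].
Qed.

Theorem theorem2 : partial_cube G8 /\ ~ theta_graceful G8.
Proof.
split; last exact: G8_not_theta_graceful.
exact: partial_cube_embedding G8_adj_code G8_walk_ham.
Qed.
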